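(* Let $X$ be an $R$-module with $\mathrm{Hom}_R(M,X)\neq0$. If $X$ is an $M$-prime module, then $X$ is a Beachy-$M$-prime module.
   Context: $R$ is a ring with identity, modules are unital left $R$-modules, $M$ is a fixed left $R$-module. $\mathrm{Ann}_M(X):=\bigcap_{f\in\mathrm{Hom}_R(M,X)}\ker f$. For $N\le M$ and a module $X$, $N\cdot X$ is the intersection of the kernels of all homomorphisms $X\to W$ where $W$ ranges over modules with $f(N)=0$ for all $f\in\mathrm{Hom}_R(M,W)$ (for $Y\le X$, $N\cdot Y$ is formed regarding $Y$ as a module). A proper submodule $P$ of $X$ is $M$-prime if for all $N\le M$, $Y\le X$, $N\cdot Y\subseteq P$ implies $N\cdot X\subseteq P$ or $Y\subseteq P$; $X$ is an $M$-prime module if $X\ne0$ and $(0)$ is an $M$-prime submodule. A module $X$ is Beachy-$M$-prime if $\mathrm{Hom}_R(M,X)\neq0$ and $\mathrm{Ann}_M(Y)=\mathrm{Ann}_M(X)$ for all submodules $Y\le X$ with $\mathrm{Hom}_R(M,Y)\neq0$. *)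

From HB Require Import structures.
From mathcomp Require Import all_boot all_algebra.
Set Implicit Arguments. Unset Strict Implicit. Unset Printing Implicit Defensive.
Import GRing.Theory.
Local Open Scope ring_scope.

Section ModuleDefs.
Variable R : pzRingType.

Definition is_submod (X : lmodType R) (Y : X -> Prop) : Prop :=
  Y 0 /\ (forall (a : R) (x y : X), Y x -> Y y -> Y (a *: x + y)).

(* A function g : X -> W whose restriction to the submodule Y is an
   R-module homomorphism Y -> W (values outside Y are irrelevant);
   this represents Hom_R(Y, W) with Y regarded as a module. *)
Definition hom_on (X W : lmodType R) (Y : X -> Prop) (g : X -> W) : Prop :=
  forall (a : R) (x y : X), Y x -> Y y -> g (a *: x + y) = a *: g x + g y.

Definition fullsub (X : lmodType R) : X -> Prop := fun _ => True.

(* N . Y : intersection of kernels of all homomorphisms Y -> W, where W ranges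
   over modules such that f(N) = 0 for every f in Hom_R(M, W). *)
Definition mdot (M : lmodType R) (N : M -> Prop) (X : lmodType R)
    (Y : X -> Prop) : X -> Prop :=
  fun x => Y x /\
    forall (W : lmodType R) (g : X -> W),
      hom_on Y g ->
      (forall (f : {linear M -> W}) (n : M), N n -> f n = 0) ->
      g x = 0.

Definition M_prime_submod (M X : lmodType R) (P : X -> Prop) : Prop :=
  is_submod P /\ (exists x : X, ~ P x) /\
  forall (N : M -> Prop) (Y : X -> Prop),
    is_submod N -> is_submod Y ->
    (forall x, mdot N Y x -> P x) ->
    (forall x, mdot N (@fullsub X) x -> P x) \/ (forall x, Y x -> P x).

Definition M_prime_module (M X : lmodType R) : Prop :=
  (exists x : X, x <> 0) /\ M_prime_submod M (fun x : X => x = 0).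

Definition hom_nonzero_into (M X : lmodType R) (Y : X -> Prop) : Prop :=
  exists f : {linear M -> X}, (forall m, Y (f m)) /\ exists m, f m <> 0.

Definition AnnM (M X : lmodType R) (Y : X -> Prop) : M -> Prop :=
  fun m => forall f : {linear M -> X}, (forall m', Y (f m')) -> f m = 0.

Definition beachy_M_prime (M X : lmodType R) : Prop :=
  hom_nonzero_into M (@fullsub X) /\
  forall Y : X -> Prop, is_submod Y -> hom_nonzero_into M Y ->
    forall m : M, AnnM Y m <-> AnnM (@fullsub X) m.

End ModuleDefs.

From HB Require Import structures.
From mathcomp Require Import all_boot all_algebra.
From mathcomp Require Import boolp.
Set Implicit Arguments. Unset Strict Implicit. Unset Printing Implicit Defensive.
Import GRing.Theory.
Local Open Scope ring_scope.

(* Let Y be a submodule of X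
   with Hom(M, Y) <> 0 and put N := Ann_M(Y).  One inclusion,
   Ann_M(X) <= Ann_M(Y), holds because Ann_M is antitone in the target.
   For the other one:
   - N . Y = 0: test the definition of N . Y against W := Y (regarded as a
     module) and a retraction X -> Y which is the identity on Y; every map
     M -> Y kills N by definition of N, so every x in N . Y vanishes;
   - since X is M-prime, N . X = 0 or Y = 0; the latter contradicts
     Hom(M, Y) <> 0, so N . X = 0;
   - for every f : M -> X, f(N) lies in N . X, hence f(N) = 0, i.e.
     N <= Ann_M(X). *)

(* A submodule packed with its closure proof, so that the module structure on
   its carrier can be declared canonically. *)
Record submodule (R : pzRingType) (X : lmodType R) := Submodule {
  submod_mem : X -> Prop;
  submod_closed : is_submod (R := R) submod_mem
}.

Section SubmoduleAsModule.
Variables (R : pzRingType) (X : lmodType R) (S : submodule X).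

Definition submod_pred (x : X) : bool := `[< submod_mem S x >].

Lemma submod_pred_closed : subsemimod_closed submod_pred.
Proof.
have [S0 SD] := submod_closed S; split; first split.
- by apply/asboolP.
- move=> x y /asboolP Sx /asboolP Sy; apply/asboolP.
  by have := SD 1 x y Sx Sy; rewrite scale1r.
- move=> a x /asboolP Sx; apply/asboolP.
  by have := SD a x 0 Sx S0; rewrite addr0.
Qed.

HB.instance Definition _ :=
  GRing.isSubmodClosed.Build R X submod_pred submod_pred_closed.

Record submod_type := SubmodElt {submod_val : X; submod_valP : submod_pred submod_val}.
HB.instance Definition _ := [isSub for submod_val].
HB.instance Definition _ := [Choice of submod_type by <:].
HB.instance Definition _ := [SubChoice_isSubLmodule of submod_type by <:].

Lemma submod_val_hom : hom_on (@fullsub R submod_type) submod_val.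
Proof.
move=> a x y _ _.
by change (val (a *: x + y) = a *: val x + val y); rewrite linearP.
Qed.

Lemma submod_val_mem (y : submod_type) : submod_mem S (val y).
Proof. exact/asboolP/submod_valP. Qed.

Definition submod_retract (x : X) : submod_type :=
  match pselect (submod_mem S x) with
  | left Sx => SubmodElt (asboolT Sx : submod_pred x)
  | right _ => 0
  end.

Lemma submod_retractK (x : X) : submod_mem S x -> val (submod_retract x) = x.
Proof. by rewrite /submod_retract; case: pselect. Qed.

Lemma submod_retract_hom : hom_on (submod_mem S) submod_retract.
Proof.
move=> a u v Su Sv; apply: val_inj.
have Sauv : submod_mem S (a *: u + v) by case: (submod_closed S) => _; apply.
by rewrite /= !submod_retractK.
Qed.

End SubmoduleAsModule.

Section Composition.
Variables (R : pzRingType) (M X W : lmodType R) (f : {linear M -> X}) (g : X -> W).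
Hypothesis g_hom : hom_on (@fullsub R X) g.

Definition comp_hom (m : M) : W := g (f m).

Lemma comp_hom_linear : linear comp_hom.
Proof. by move=> a x y; rewrite /comp_hom linearP; apply: g_hom. Qed.

HB.instance Definition _ :=
  GRing.isLinear.Build R M W *:%R comp_hom comp_hom_linear.

Definition comp_linear : {linear M -> W} := comp_hom.

Lemma comp_linearE (m : M) : comp_linear m = g (f m).
Proof. by []. Qed.

End Composition.

Section Annihilators.
Variables (R : pzRingType) (M X : lmodType R).

Lemma AnnM_submod (Y : X -> Prop) : is_submod (AnnM (M := M) Y).
Proof.
split; first by move=> f _; rewrite linear0.
by move=> a x y Ax Ay f fY; rewrite linearP Ax // Ay // scaler0 addr0.
Qed.

Lemma AnnM_antitone (Y Z : X -> Prop) :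
  (forall x, Y x -> Z x) -> forall m : M, AnnM Z m -> AnnM Y m.
Proof. by move=> YZ m Zm f fY; apply: Zm => m'; apply/YZ/fY. Qed.

Lemma linear_image_in_mdot (N : M -> Prop) (f : {linear M -> X}) (n : M) :
  N n -> mdot N (@fullsub R X) (f n).
Proof.
move=> Nn; split=> // W g g_hom killN.
by rewrite -(comp_linearE f g_hom); apply: killN.
Qed.

Lemma mdot_AnnM_self (Y : X -> Prop) (HY : is_submod Y) (x : X) :
  mdot (AnnM (M := M) Y) Y x -> x = 0.
Proof.
pose S := Submodule HY; move=> [Yx dotx].
have killAnn (f : {linear M -> submod_type S}) (n : M) : AnnM Y n -> f n = 0.
  move=> Ann_n; apply: val_inj; rewrite raddf0 /=.
  rewrite -(comp_linearE f (@submod_val_hom _ _ S)).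
  by apply: Ann_n => m; exact: (submod_val_mem (f m)).
have := dotx _ _ (@submod_retract_hom _ _ S) killAnn.
by move/(congr1 val); rewrite submod_retractK.
Qed.

End Annihilators.

Theorem proposition2p7 (R : pzRingType) (M X : lmodType R) :
  hom_nonzero_into M (@fullsub R X) ->
  M_prime_module M X ->
  beachy_M_prime M X.
Proof.
move=> homX [_ [_ [_ primeX]]]; split=> // Y HY [f [fY [m0 fm0]]] m.
split; last exact: AnnM_antitone.
have [dotX0|Y0] := primeX _ Y (AnnM_submod M Y) HY (mdot_AnnM_self (M := M) HY).
- by move=> AnnYm g _; apply/dotX0/linear_image_in_mdot.
- by have := Y0 _ (fY m0).
Qed.
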